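(* The string rewriting system $T=D_T\cup A\cup B$ is terminating if and only if the Collatz conjecture holds, i.e. if and only if for every $n\in\mathbb{N}^+$ there is $k\in\mathbb{N}$ with $C^k(n)=1$ (equivalently, every trajectory of the map $\tau(n)=n/2$ for even $n$, $\tau(n)=(3n+1)/2$ for odd $n$, on $\mathbb{N}^+$ contains $1$).
   Context: $C:\mathbb{N}^+\to\mathbb{N}^+$ is the Collatz function $C(n)=n/2$ for $n$ even, $C(n)=3n+1$ for $n$ odd; $C^k$ is the $k$-fold iterate. A string rewriting system $R$ induces $u\ell v\to_R urv$ for each rule $\ell\to r$; it is terminating if there is no infinite rewrite sequence. Alphabet $\{0_2,1_2,0_3,1_3,2_3,\lhd,\rhd\}$. $D_T=\{0_2\rhd\to\rhd,\ 1_2\rhd\to 2_3\rhd\}$; $A=\{0_20_3\to0_30_2,\ 0_21_3\to0_31_2,\ 0_22_3\to1_30_2,\ 1_20_3\to1_31_2,\ 1_21_3\to2_30_2,\ 1_22_3\to2_31_2\}$; $B=\{\lhd0_3\to\lhd1_2,\ \lhd1_3\to\lhd0_20_2,\ \lhd2_3\to\lhd0_21_2\}$. (Intended reading: a string $\lhd d_1\cdots d_k\rhd$ represents the value obtained from $1$ by applying successively $d_1,\dots,d_k$, where $a_b$ acts as $x\mapsto bx+a$.) *)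

From HB Require Import structures.
From mathcomp Require Import all_boot.
Set Implicit Arguments. Unset Strict Implicit. Unset Printing Implicit Defensive.

Definition collatz (n : nat) : nat := if odd n then 3 * n + 1 else n %/ 2.

Inductive sym : Type := s02 | s12 | s03 | s13 | s23 | lhd | rhd.

Definition sym_eqb (a b : sym) : bool :=
  match a, b with
  | s02, s02 | s12, s12 | s03, s03 | s13, s13 | s23, s23
  | lhd, lhd | rhd, rhd => true
  | _, _ => false
  end.
Lemma sym_eqP : Equality.axiom sym_eqb.
Proof. by case; case; constructor. Qed.
HB.instance Definition _ := hasDecEq.Build sym sym_eqP.

Definition srs := seq (seq sym * seq sym).

Definition D_T : srs :=
  [:: ([:: s02; rhd], [:: rhd]);
      ([:: s12; rhd], [:: s23; rhd])].

Definition A_rules : srs :=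
  [:: ([:: s02; s03], [:: s03; s02]);
      ([:: s02; s13], [:: s03; s12]);
      ([:: s02; s23], [:: s13; s02]);
      ([:: s12; s03], [:: s13; s12]);
      ([:: s12; s13], [:: s23; s02]);
      ([:: s12; s23], [:: s23; s12])].

Definition B_rules : srs :=
  [:: ([:: lhd; s03], [:: lhd; s12]);
      ([:: lhd; s13], [:: lhd; s02; s02]);
      ([:: lhd; s23], [:: lhd; s02; s12])].

Definition T_rules : srs := D_T ++ A_rules ++ B_rules.

Definition rewrite_step (R : srs) (s t : seq sym) : Prop :=
  exists u v l r, (l, r) \in R /\ s = u ++ l ++ v /\ t = u ++ r ++ v.

Definition terminating (R : srs) : Prop :=
  ~ exists f : nat -> seq sym, forall i, rewrite_step R (f i) (f i.+1).

From mathcomp Require Import all_boot zify.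
From Stdlib Require Import Classical ClassicalEpsilon.
Set Implicit Arguments. Unset Strict Implicit. Unset Printing Implicit Defensive.

(** A string [<| d_1 ... d_k |>] with digits d_i in {0_2,1_2,0_3,1_3,2_3} encodes
  the number obtained from 1 by applying x -> b x + a for each digit a_b.  The
  rules of A and B rewrite digits without changing this value, while the rules
  of D_T perform one step (for 0_2: n -> n/2) or two steps (for 1_2:
  n -> (3n+1)/2) of the Collatz map.

  (=>) Every framed word [<| w |>] with w nonempty is reducible, and each of
  its rewrite steps yields a framed word whose value lies on the Collatz
  trajectory.  Starting from a framed word of value n (binary expansion), a
  trajectory avoiding 1 thus yields an infinite rewrite sequence.

  (<=) We show that every string is strongly normalizing.  Strings without
  [<|] decrease lexicographically in (#binary digits, #inversions), strings
  without [|>] in (#ternary digits, #inversions), where an inversion is a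
  binary digit occurring before a ternary one.  No rule rewrites across a
  marker, so strong normalization is compositional at markers; it remains to
  treat framed words [<| w |>], by induction on the number of Collatz steps
  from the value of w to 1, and inside by the lexicographic measure on w. *)

Section Relations.
Variables (T : Type) (r : T -> T -> Prop).

Definition sn : T -> Prop := Acc (fun y x => r x y).

Lemma no_chain_of_sn : (forall x, sn x) -> ~ exists f : nat -> T, forall i, r (f i) (f i.+1).
Proof.
move=> sn_all [f chain].
suff no_chain x : sn x -> forall g, g 0 = x -> ~ (forall i, r (g i) (g i.+1)).
  exact: no_chain (sn_all (f 0)) f erefl chain.
elim=> {}x _ IHx g g0 g_chain.
apply: (IHx (g 1) _ (fun i => g i.+1) erefl (fun i => g_chain i.+1)).
by rewrite -g0; exact: g_chain 0.
Qed.

Lemma chain_of_invariant (P : T -> Prop) x0 :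
  P x0 -> (forall x, P x -> exists2 y, P y & r x y) ->
  exists f : nat -> T, forall i, r (f i) (f i.+1).
Proof.
move=> P_x0 succ.
have next (x : {x | P x}) : {y | P y /\ r (sval x) y}.
  apply: constructive_indefinite_description.
  by have [y] := succ _ (svalP x); exists y.
pose g (x : {x | P x}) : {x | P x} := exist P _ (proj1 (svalP (next x))).
exists (fun i => sval (iter i g (exist P x0 P_x0))) => i.
by rewrite iterS; exact: (proj2 (svalP (next _))).
Qed.

End Relations.

Definition lex_lt (a b : nat * nat) : bool :=
  (a.1 < b.1) || (a.1 == b.1) && (a.2 < b.2).

Lemma lex_ind (T : Type) (mu : T -> nat * nat) (P : T -> Prop) :
  (forall x, (forall y, lex_lt (mu y) (mu x) -> P y) -> P x) -> forall x, P x.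
Proof.
move=> IH x; have [a] := ubnP (mu x).1; elim: a x => // a IHa x lt_a.
have [b] := ubnP (mu x).2; elim: b x lt_a => // b IHb x lt_a lt_b.
apply: IH => y /orP[lt1 | /andP[/eqP eq1 lt2]].
- by apply: IHa; lia.
- by apply: IHb; lia.
Qed.

Lemma two_letter_factor (T : Type) (m x y : T) P Q u v :
  P ++ m :: Q = u ++ [:: x; y] ++ v ->
  [\/ exists2 e, P = u ++ [:: x; y] ++ e & v = e ++ m :: Q,
      [/\ P = rcons u x, y = m & v = Q],
      [/\ u = P, x = m & Q = y :: v]
    | exists2 e, u = P ++ m :: e & Q = e ++ [:: x; y] ++ v].
Proof.
elim: P u => [|p P IH] [|z u] /=.
- by case=> -> ->; apply: Or43.
- by case=> -> ->; apply: Or44; exists u.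
- case: P IH => [|p' P] _ [-> Ey EQ] /=; first by apply: Or42; rewrite Ey EQ.
  by apply: Or41; exists P; rewrite ?Ey.
- case=> -> /IH[[e -> ->]|[-> -> ->]|[-> -> ->]|[e -> ->]].
  + by apply: Or41; exists e.
  + exact: Or42.
  + exact: Or43.
  + by apply: Or44; exists e.
Qed.

Lemma two_letter_factor_framed (T : Type) (L R x y : T) w u v :
  L :: rcons w R = u ++ [:: x; y] ++ v ->
  [\/ [/\ u = [::], x = L & y :: v = rcons w R],
      [/\ v = [::], y = R & rcons u x = L :: w]
    | exists2 u', u = L :: u' & exists2 v', v = rcons v' R & w = u' ++ [:: x; y] ++ v'].
Proof.
case: u => [|z u] /=; first by case=> -> ->; apply: Or31.
case=> -> /esym; case/lastP: v => [|v q].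
- rewrite -cat_rcons cats1 => /rcons_inj[<- ->].
  exact: Or32.
- rewrite -[[:: x, y & _]]/(rcons [:: x, y & v] q) -rcons_cat => /rcons_inj[<- ->].
  by apply: Or33; exists u => //; exists v.
Qed.

Lemma adjacent_switch (T : Type) (p : pred T) x s :
  p x -> ~~ p (last x s) ->
  exists u a b v, [/\ x :: s = u ++ [:: a; b] ++ v, p a & ~~ p b].
Proof.
elim: s x => [|y s IH] x /= px; first by rewrite px.
have [py /(IH y py)[u [a [b [v [-> pa pb]]]]] | npy _] := boolP (p y).
- by exists (x :: u), a, b, v.
- by exists [::], x, y, s.
Qed.

(** ** Rewriting does not cross end-markers *)

(** The rule [l -> r] has a two-letter left side that meets the letter [m] at
  most in its second position, and then [r] also ends with [m]. *)
Definition right_end_rule (m : sym) (lr : seq sym * seq sym) : bool :=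
  if lr.1 is [:: x; y] then
    (x != m) && ((y == m) ==> (rcons (take (size lr.2).-1 lr.2) m == lr.2))
  else false.

Definition left_end_rule (m : sym) (lr : seq sym * seq sym) : bool :=
  if lr.1 is [:: x; y] then (y != m) && ((x == m) ==> (m :: behead lr.2 == lr.2))
  else false.

Section EndMarkers.
Variables (R : srs) (m : sym).
Local Notation step := (rewrite_step R).

Lemma step_right_end P Q t :
  all (right_end_rule m) R -> step (P ++ m :: Q) t ->
  (exists2 P', t = P' ++ m :: Q & step (rcons P m) (rcons P' m)) \/
  (exists2 Q', t = P ++ m :: Q' & step Q Q').
Proof.
move=> /allP R_end [u [v [l [r [lr_R [Es ->]]]]]].
have := R_end _ lr_R; case: l Es lr_R => [|x [|y []]] //= Es lr_R /andP[xm ym].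
case: (two_letter_factor Es) => [[e -> ->]|[-> ym' ->]|[_ xm' _]|[e -> ->]].
- left; exists (u ++ r ++ e); first by rewrite -!catA.
  by exists u, (rcons e m), [:: x; y], r; rewrite -!rcons_cat.
- subst y; move: ym; rewrite eqxx /= => /eqP Er; left.
  exists (u ++ take (size r).-1 r); first by rewrite -catA -cat_rcons Er.
  exists u, [::], [:: x; m], r.
  by rewrite !cats0 -cats1 cat_rcons rcons_cat Er.
- by rewrite xm' eqxx in xm.
- by right; exists (e ++ r ++ v); [rewrite -catA | exists e, v, [:: x; y], r].
Qed.

Lemma step_left_end P Q t :
  all (left_end_rule m) R -> step (P ++ m :: Q) t ->
  (exists2 P', t = P' ++ m :: Q & step P P') \/
  (exists2 Q', t = P ++ m :: Q' & step (m :: Q) (m :: Q')).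
Proof.
move=> /allP R_end [u [v [l [r [lr_R [Es ->]]]]]].
have := R_end _ lr_R; case: l Es lr_R => [|x [|y []]] //= Es lr_R /andP[ym xm].
case: (two_letter_factor Es) => [[e -> ->]|[_ ym' _]|[-> xm' ->]|[e -> ->]].
- by left; exists (u ++ r ++ e); [rewrite -!catA | exists u, e, [:: x; y], r].
- by rewrite ym' eqxx in ym.
- subst x; move: xm; rewrite eqxx /= => /eqP Er; right.
  exists (behead r ++ v); first by rewrite -Er.
  by exists [::], v, [:: m; y], r; do 2!split => //; rewrite -{2}Er.
- by right; exists (e ++ r ++ v); [rewrite -catA | exists (m :: e), v, [:: x; y], r].
Qed.

Lemma sn_right_end P Q :
  all (right_end_rule m) R -> sn step (rcons P m) -> sn step Q -> sn step (P ++ m :: Q).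
Proof.
move=> R_end snP snQ; move Es: (rcons P m) snP => s snP.
elim: snP P Es Q snQ => {}s _ IHs P Es Q snQ; subst s; elim: snQ => {}Q snQ IHQ.
apply: Acc_intro => t /(step_right_end R_end)[[P' -> stP]|[Q' -> stQ]].
- exact: IHs stP P' erefl Q (Acc_intro _ snQ).
- exact: IHQ.
Qed.

Lemma sn_left_end P Q :
  all (left_end_rule m) R -> sn step P -> sn step (m :: Q) -> sn step (P ++ m :: Q).
Proof.
move=> R_end snP; elim: snP Q => {}P _ IHP Q snQ.
move Es: (m :: Q) snQ => s snQ; elim: snQ Q Es => {}s snQ IHQ Q Es; subst s.
apply: Acc_intro => t /(step_left_end R_end)[[P' -> stP]|[Q' -> stQ]].
- exact: IHP stP Q (Acc_intro _ snQ).
- exact: IHQ stQ Q' erefl.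
Qed.

End EndMarkers.

(** ** Digits, measures and values *)

Definition ismark (x : sym) : bool := match x with lhd | rhd => true | _ => false end.
Definition isbin (x : sym) : bool := match x with s02 | s12 => true | _ => false end.
Definition ister (x : sym) : bool := (~~ ismark x) && ~~ isbin x.

Definition markerfree (w : seq sym) : bool := ~~ has ismark w.

Lemma markerfree_notin w m : markerfree w -> ismark m -> m \notin w.
Proof. by move=> mf_w m_mark; apply: contra mf_w => m_w; apply/hasP; exists m. Qed.

Lemma markerfree_mem w x : markerfree w -> x \in w -> ~~ ismark x.
Proof. by move=> /hasPn; apply. Qed.

Definition bin (w : seq sym) : nat := count isbin w.
Definition ter (w : seq sym) : nat := count ister w.

Fixpoint inv (w : seq sym) : nat :=
  if w is x :: w' then (if isbin x then ter w' else 0) + inv w' else 0.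

Lemma inv_cat u v : inv (u ++ v) = inv u + inv v + bin u * ter v.
Proof.
elim: u => [|x u IH] /=; first by rewrite /bin /=; lia.
by rewrite IH /bin /ter count_cat /=; case: (isbin x) => /=; nia.
Qed.

Definition act (n : nat) (x : sym) : nat :=
  match x with
  | s02 => 2 * n | s12 => 2 * n + 1 | s03 => 3 * n | s13 => 3 * n + 1
  | s23 => 3 * n + 2 | lhd => 1 | rhd => n
  end.

Definition value (w : seq sym) : nat := foldl act 1 w.

Lemma value_rcons w x : value (rcons w x) = act (value w) x.
Proof. exact: foldl_rcons. Qed.

Lemma value_gt0 w : 0 < value w.
Proof.
suff act_gt0 n : 0 < n -> 0 < foldl act n w by exact: act_gt0.
by elim: w n => //= x w IH n n_gt0; apply: IH; case: x => /=; lia.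
Qed.

(** Every positive number is a value: take its binary expansion. *)
Lemma value_onto n : 0 < n -> exists2 w, markerfree w & value w = n.
Proof.
elim/ltn_ind: n => n IH n_gt0; have [->|n_neq1] := eqVneq n 1; first by exists [::].
have n_eq := odd_double_half n; rewrite -mul2n in n_eq.
have [w mf_w val_w] : exists2 w, markerfree w & value w = n./2.
  by apply: IH; move: n_eq n_neq1; case: (odd n) => /=; lia.
exists (rcons w (if odd n then s12 else s02)).
- by rewrite /markerfree has_rcons negb_or -/(markerfree w) mf_w; case: (odd n).
- by rewrite value_rcons val_w; move: n_eq; case: (odd n) => /=; lia.
Qed.

(** Facts about the finitely many rules are checked by computation. *)
Lemma rules_all (R : srs) (P : seq sym -> seq sym -> bool) :
  all (fun lr => P lr.1 lr.2) R -> forall l r, (l, r) \in R -> P l r.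
Proof. by move=> /allP PR l r /PR. Qed.

Lemma T_rules_right_end : all (right_end_rule rhd) T_rules.
Proof. by []. Qed.

Lemma T_rules_left_end : all (left_end_rule lhd) T_rules.
Proof. by []. Qed.

Lemma A_rule_shape l r : (l, r) \in A_rules -> exists a b, [/\ l = [:: a; b], isbin a & ister b].
Proof. by rewrite !inE => /or4P[| | |/orP[|/orP[]]] /eqP[-> _]; do 2!eexists. Qed.

Lemma A_rule_measure l r : (l, r) \in A_rules ->
  [&& markerfree r, bin r == bin l, ter r == ter l & inv r < inv l].
Proof. by move: l r; apply: rules_all. Qed.

Lemma A_rule_value l r n : (l, r) \in A_rules -> foldl act n r = foldl act n l.
Proof. by rewrite !inE => /or4P[| | |/orP[|/orP[]]] /eqP[-> ->] /=; lia. Qed.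

Lemma A_rule_cover a b : isbin a -> ister b -> has (fun lr => lr.1 == [:: a; b]) A_rules.
Proof. by case: a; case: b. Qed.

Lemma B_rule_shape l r : (l, r) \in B_rules ->
  exists c r', [/\ l = [:: lhd; c], r = lhd :: r', ister c & markerfree r'].
Proof. by rewrite !inE => /or3P[] /eqP[-> ->]; do 2!eexists. Qed.

Lemma B_rule_measure l r : (l, r) \in B_rules ->
  [&& lhd \in l, rhd \notin r, ter r < ter l & foldl act 1 r == foldl act 1 l].
Proof. by move: l r; apply: rules_all. Qed.

Lemma B_rule_cover c : ister c -> has (fun lr => lr.1 == [:: lhd; c]) B_rules.
Proof. by case: c. Qed.

Lemma D_rule_measure l r : (l, r) \in D_T -> [&& rhd \in l, lhd \notin r & bin r < bin l].
Proof. by move: l r; apply: rules_all. Qed.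

Lemma A_step_measure u v l r : (l, r) \in A_rules ->
  [/\ bin (u ++ r ++ v) = bin (u ++ l ++ v), ter (u ++ r ++ v) = ter (u ++ l ++ v)
    & inv (u ++ r ++ v) < inv (u ++ l ++ v)].
Proof.
move=> /A_rule_measure /and4P[_ /eqP eb /eqP et lt].
rewrite /bin /ter in eb et.
by rewrite !inv_cat /bin /ter !count_cat eb et; split => //; lia.
Qed.

(** ** Strings with at most one kind of marker terminate *)

Local Notation step := (rewrite_step T_rules).

(** Without [<|], only A and D rules apply: lexicographic decrease of
  (#binary digits, #inversions). *)
Lemma step_no_lhd (s t : seq sym) :
  lhd \notin s -> step s t -> (lhd \notin t) && lex_lt (bin t, inv t) (bin s, inv s).
Proof.
move=> no_lhd [u [v [l [r [lr_T [Es ->]]]]]]; subst s.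
move: no_lhd lr_T; rewrite !mem_cat !negb_or => /and3P[-> l_lhd ->] /or3P[lr_D|lr_A|lr_B].
- case/and3P: (D_rule_measure lr_D) => _ -> lt /=.
  by rewrite /lex_lt /bin !count_cat /= -/(bin r) -/(bin l); apply/orP; left; lia.
- have [-> _ lt] := A_step_measure u v lr_A.
  case/and4P: (A_rule_measure lr_A) => mf_r _ _ _.
  by rewrite (markerfree_notin mf_r) //= /lex_lt eqxx lt orbT.
- by case/and4P: (B_rule_measure lr_B) => l_lhd' _ _ _; rewrite l_lhd' in l_lhd.
Qed.

(** Without [|>], only A and B rules apply: lexicographic decrease of
  (#ternary digits, #inversions). *)
Lemma step_no_rhd (s t : seq sym) :
  rhd \notin s -> step s t -> (rhd \notin t) && lex_lt (ter t, inv t) (ter s, inv s).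
Proof.
move=> no_rhd [u [v [l [r [lr_T [Es ->]]]]]]; subst s.
move: no_rhd lr_T; rewrite !mem_cat !negb_or => /and3P[-> l_rhd ->] /or3P[lr_D | lr_A | lr_B].
- by case/and3P: (D_rule_measure lr_D) => l_rhd' _ _; rewrite l_rhd' in l_rhd.
- have [_ -> lt] := A_step_measure u v lr_A.
  case/and4P: (A_rule_measure lr_A) => mf_r _ _ _.
  by rewrite (markerfree_notin mf_r) //= /lex_lt eqxx lt orbT.
- case/and4P: (B_rule_measure lr_B) => _ -> lt _ /=.
  by rewrite /lex_lt /ter !count_cat /= -/(ter r) -/(ter l); apply/orP; left; lia.
Qed.

Lemma sn_no_lhd (s : seq sym) : lhd \notin s -> sn step s.
Proof.
elim/(@lex_ind _ (fun s => (bin s, inv s))): s => s IH no_lhd.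
by apply: Acc_intro => t /(step_no_lhd no_lhd) /andP[/IH]; apply.
Qed.

Lemma sn_no_rhd (s : seq sym) : rhd \notin s -> sn step s.
Proof.
elim/(@lex_ind _ (fun s => (ter s, inv s))): s => s IH no_rhd.
by apply: Acc_intro => t /(step_no_rhd no_rhd) /andP[/IH]; apply.
Qed.

(** ** Framed words *)

Definition framed (w : seq sym) : seq sym := lhd :: rcons w rhd.

(** The rewrite steps of framed words, read on their contents: an A step
  anywhere, a B step at the left end, a D step at the right end. *)
Inductive frame_step : seq sym -> seq sym -> Prop :=
| FrameA u v l r of (l, r) \in A_rules : frame_step (u ++ l ++ v) (u ++ r ++ v)
| FrameB c r v of ([:: lhd; c], lhd :: r) \in B_rules : frame_step (c :: v) (r ++ v)
| FrameHalve u : frame_step (rcons u s02) u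
| FrameOdd u : frame_step (rcons u s12) (rcons u s23).

Lemma frame_step_rewrite w w' : frame_step w w' -> step (framed w) (framed w').
Proof.
rewrite /framed; case=> [u v l r lr_A | c r v lr_B | u | u].
- exists (lhd :: u), (rcons v rhd), l, r.
  by rewrite !mem_cat lr_A orbT !rcons_cat.
- exists [::], (rcons v rhd), [:: lhd; c], (lhd :: r).
  by rewrite !mem_cat lr_B !orbT rcons_cat.
- by exists (lhd :: u), [::], [:: s02; rhd], [:: rhd]; rewrite !cats0 -!cats1 -catA.
- exists (lhd :: u), [::], [:: s12; rhd], [:: s23; rhd].
  by rewrite !cats0 -!cats1 -!catA.
Qed.

Lemma frame_step_markerfree w w' : markerfree w -> frame_step w w' -> markerfree w'.
Proof.
move=> + st; rewrite /markerfree; case: st => [u v l r lr_A | c r v lr_B | u | u] /=;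
  rewrite ?has_cat ?has_rcons ?negb_or //.
- by case/and4P: (A_rule_measure lr_A) => /negbTE-> _ _ _ /and3P[-> _ ->].
- have [_ [r' [_ [<-] _ /negbTE->]]] := B_rule_shape lr_B.
  by case/andP=> _ ->.
Qed.

Lemma step_framed w t :
  markerfree w -> step (framed w) t -> exists2 w', t = framed w' & frame_step w w'.
Proof.
move=> mf_w [u [v [l [r [lr_T [Es ->]]]]]]; rewrite /framed in Es.
move: lr_T; rewrite !mem_cat => /or3P[lr_D|lr_A|lr_B].
- have rhd_notin_w u' v' x : w = u' ++ [:: x; rhd] ++ v' -> False.
    move=> Ew; have := markerfree_notin mf_w (isT : ismark rhd).
    by rewrite Ew !mem_cat !inE eqxx !orbT.
  move: lr_D Es; rewrite !inE => /orP[] /eqP[-> ->] Es;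
    case: (two_letter_factor_framed Es) => [[_ /eqP //]|[-> _]|[u' _ [v' _ /rhd_notin_w[]]]];
    case: u {Es} => [[/eqP //]|z u [-> <-]].
  + by exists u; [rewrite /framed /= cats1 | exact: FrameHalve].
  + by exists (rcons u s23); [rewrite /framed /= -!cats1 -catA | exact: FrameOdd].
- have [a [b [El ba tb]]] := A_rule_shape lr_A; subst l.
  case: (two_letter_factor_framed Es) => [[_ Ea _]|[_ Eb _]|[u' -> [v' -> ->]]].
  + by rewrite Ea in ba.
  + by rewrite Eb in tb.
  + by exists (u' ++ r ++ v'); [rewrite /framed !rcons_cat | exact: FrameA].
- have [c [r' [El Er tc _]]] := B_rule_shape lr_B; subst l r.
  case: (two_letter_factor_framed Es) => [[-> _]|[_ Ec _]|[u' _ [v' _ Ew]]].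
  + case: w {Es} mf_w => [_ [Ec _]|c' w' _ [<- ->]]; first by rewrite Ec in tc.
    by exists (r' ++ w'); [rewrite /framed rcons_cat | exact: FrameB].
  + by rewrite Ec in tc.
  + have := markerfree_notin mf_w (isT : ismark lhd).
    by rewrite Ew !mem_cat mem_head orbT.
Qed.

(** Every nonempty framed word is reducible: it ends with a binary digit, or
  starts with a ternary one, or contains a binary digit before a ternary one. *)
Lemma frame_step_exists w : markerfree w -> w != [::] -> exists w', frame_step w w'.
Proof.
case: w => // x s mf_w _.
have [last_bin | last_ter] := boolP (isbin (last x s)).
  rewrite lastI; move: last_bin; case: (last x s) => // _.
  - by eexists; apply: FrameHalve.
  - by eexists; apply: FrameOdd.
have digit y : y \in x :: s -> ~~ isbin y -> ister y.
  by move=> y_w y_nbin; rewrite /ister y_nbin (markerfree_mem mf_w y_w).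
have [x_bin | x_nbin] := boolP (isbin x).
- have [u [a [b [v [Es ba b_nbin]]]]] := adjacent_switch x_bin last_ter.
  have tb : ister b by apply: digit b_nbin; rewrite Es !mem_cat !inE eqxx !orbT.
  have /hasP[[l r] lr_A /eqP /= El] := A_rule_cover ba tb.
  by exists (u ++ r ++ v); rewrite Es -El; apply: FrameA.
- have /hasP[[l r] lr_B /eqP /= El] := B_rule_cover (digit x (mem_head x s) x_nbin).
  have [_ [r' [_ Er _ _]]] := B_rule_shape lr_B.
  by exists (r' ++ s); apply: FrameB; rewrite -El -Er.
Qed.

(** ** Values along rewrite steps of framed words *)

Lemma collatz_even n : collatz (2 * n) = n.
Proof. by rewrite /collatz oddM andFb mulKn. Qed.

Lemma collatz_odd n : collatz (2 * n + 1) = 2 * (3 * n + 2).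
Proof. rewrite /collatz addn1 oddS oddM /=; lia. Qed.

Lemma frame_step_value w w' : frame_step w w' ->
  [\/ value w' = value w /\ lex_lt (ter w', inv w') (ter w, inv w),
      1 < value w /\ value w' = collatz (value w)
    | [/\ 1 < value w, 1 < collatz (value w) & value w' = collatz (collatz (value w))]].
Proof.
case=> [u v l r lr_A | c r v lr_B | u | u].
- apply: Or31; have [_ -> lt] := A_step_measure u v lr_A.
  by rewrite /value !foldl_cat (A_rule_value _ lr_A) /lex_lt eqxx lt orbT.
- apply: Or31; case/and4P: (B_rule_measure lr_B) => _ _ /= lt /eqP /= val_r.
  rewrite /value foldl_cat val_r /lex_lt /ter count_cat /= in lt *.
  by split=> //; apply/orP; left; lia.
- apply: Or32; rewrite value_rcons /= collatz_even; have := value_gt0 u.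
  by split; lia.
- apply: Or33; rewrite !value_rcons /= collatz_odd collatz_even; have := value_gt0 u.
  by split; lia.
Qed.

Lemma reach_one_step k n : iter k collatz n = 1 -> 1 < n ->
  exists2 k', k' < k & iter k' collatz (collatz n) = 1.
Proof. by case: k => [/= -> //|k reach _]; exists k; rewrite -?iterSr. Qed.

Lemma sn_framed k w : markerfree w -> iter k collatz (value w) = 1 -> sn step (framed w).
Proof.
elim/ltn_ind: k w => k IHk w.
elim/(@lex_ind _ (fun w => (ter w, inv w))): w => w IHw mf_w reach.
apply: Acc_intro => _ /(step_framed mf_w)[w' -> st].
have mf_w' := frame_step_markerfree mf_w st.
case: (frame_step_value st) => [[val_w' lt] | [gt1 val_w'] | [gt1 gt1' val_w']].
- by apply: IHw; rewrite ?val_w'.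
- have [k' lt_k reach'] := reach_one_step reach gt1.
  by apply: (IHk k'); rewrite ?val_w'.
- have [k' lt_k reach'] := reach_one_step reach gt1.
  have [k'' lt_k' reach''] := reach_one_step reach' gt1'.
  by apply: (IHk k''); rewrite ?val_w' // (ltn_trans lt_k').
Qed.

(** Under the Collatz conjecture every string [s], and also [<| s], is
  strongly normalizing: cut at the first marker and recurse. *)
Lemma sn_everywhere :
  (forall n, 0 < n -> exists k, iter k collatz n = 1) ->
  forall s, sn step s /\ sn step (lhd :: s).
Proof.
move=> collatz_conj s; have [n] := ubnP (size s); elim: n s => [|n IH] s; first by [].
have [/(split_find_nth lhd)[m w Q m_mark w_mf] | s_mf] := boolP (has ismark s); last first.
  split; first by apply: sn_no_lhd; rewrite (markerfree_notin s_mf).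
  by apply: sn_no_rhd; rewrite inE negb_or (markerfree_notin s_mf).
rewrite size_cat size_rcons ltnS => size_s.
have [snQ snLQ] := IH Q (leq_ltn_trans (leq_addl _ _) size_s).
rewrite cat_rcons -cat_cons.
have [->|->] : m = lhd \/ m = rhd by case: m m_mark => //; [left | right].
all: split.
- apply: (sn_left_end T_rules_left_end _ snLQ).
  by apply: sn_no_lhd; rewrite (markerfree_notin w_mf).
- apply: (sn_left_end T_rules_left_end _ snLQ).
  by apply: sn_no_rhd; rewrite inE negb_or (markerfree_notin w_mf).
- apply: (sn_right_end T_rules_right_end _ snQ).
  by apply: sn_no_lhd; rewrite mem_rcons inE negb_or (markerfree_notin w_mf).
- apply: (sn_right_end T_rules_right_end _ snQ).
  have [k reach] := collatz_conj _ (value_gt0 w).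
  exact: sn_framed w_mf reach.
Qed.

Lemma collatz_of_terminating :
  terminating T_rules -> forall n, 0 < n -> exists k, iter k collatz n = 1.
Proof.
move=> term n n_gt0; apply: NNPP => never; apply: term.
have [w0 mf_w0 val_w0] := value_onto n_gt0.
pose on_trajectory s := exists w k, [/\ markerfree w, s = framed w & value w = iter k collatz n].
apply: (@chain_of_invariant _ _ on_trajectory (framed w0)); first by exists w0, 0.
move=> _ [w [k [mf_w -> val_w]]].
have w_nil : w != [::] by apply/eqP => w_nil; apply: never; exists k; rewrite -val_w w_nil.
have [w' st] := frame_step_exists mf_w w_nil.
exists (framed w'); last exact: frame_step_rewrite.
exists w'; have mf_w' := frame_step_markerfree mf_w st.
case: (frame_step_value st) => [[-> _]|[_ ->]|[_ _ ->]].
- by exists k.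
- by exists k.+1; rewrite val_w iterS.
- by exists k.+2; rewrite val_w !iterS.
Qed.

Theorem mainTheorem6 :
  terminating T_rules <->
  (forall n : nat, 0 < n -> exists k : nat, iter k collatz n = 1).
Proof.
split; first exact: collatz_of_terminating.
move=> collatz_conj; apply: no_chain_of_sn => s.
exact: (sn_everywhere collatz_conj s).1.
Qed.
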